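(* Let $K\ge 3$, let $m_1<m_2<\cdots<m_K$ be pairwise co-prime positive integers with $m_1\ge 3$, let $M$ be a positive integer, and set $M_k=Mm_k$ for $k=1,\ldots,K$. Then $$D_2(M_1,\ldots,M_K)=Md,\qquad\text{where}\qquad d=\min_{I\subseteq\{1,\ldots,K\}}\Big\{\prod_{i\in I}m_i+\prod_{i\in\overline I}m_i\Big\},$$ with $\overline I=\{1,\ldots,K\}\setminus I$ and the empty product equal to $1$.
   Context: For a positive integer $n$ and an integer $x$, $\langle x\rangle_n$ denotes the remainder of $x$ modulo $n$, in $\{0,\ldots,n-1\}$, and $\mathbb Z_n=\{0,1,\ldots,n-1\}$. An $L$-set is a set with exactly $L$ elements. For a finite set $\mathcal A$ of nonnegative integers and a modulus $n_k$, the residue set is $R_k(\mathcal A)=\{\langle a\rangle_{n_k}: a\in\mathcal A\}$ (an unordered set, so repetitions collapse). For a modulus set $\mathcal N=\{n_1,\ldots,n_K\}$, the dynamic range $D_L(\mathcal N)=D_L(n_1,\ldots,n_K)$ is the minimal positive integer $D$ such that there exist two different $L$-sets $\mathcal A,\mathcal B\subseteq\mathbb Z_{D+1}$ with $R_k(\mathcal A)=R_k(\mathcal B)$ for every $k=1,\ldots,K$ (residues taken modulo $n_k$). *)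

From mathcomp Require Import all_boot.
Set Implicit Arguments. Unset Strict Implicit. Unset Printing Implicit Defensive.

Definition residues (D : nat) (n : nat) (A : {set 'I_D.+1}) : seq nat :=
  [seq (val a) %% n | a in A].

Definition ambiguous (L K : nat) (n : 'I_K -> nat) (D : nat) : Prop :=
  exists A B : {set 'I_D.+1},
    [/\ #|A| = L, #|B| = L, A != B &
        forall k : 'I_K, residues (n k) A =i residues (n k) B].

Definition is_dynamic_range (L K : nat) (n : 'I_K -> nat) (D : nat) : Prop :=
  [/\ 0 < D, ambiguous L n D &
      forall D', 0 < D' -> ambiguous L n D' -> D <= D'].

Definition split_val (K : nat) (m : 'I_K -> nat) (I : {set 'I_K}) : nat :=
  \prod_(i in I) m i + \prod_(i in ~: I) m i.

Definition dmin (K : nat) (m : 'I_K -> nat) : nat :=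
  split_val m [arg min_(I < set0) split_val m I].

(* Let {a1, a2} and {b1, b2} be two
   different pairs in [0, D] with the same residues modulo every M m_k; for each
   k either a1 = b1 and a2 = b2, or a1 = b2 and a2 = b1, modulo M m_k. If
   a1 + a2 <> b1 + b2, the sums agree modulo M m_1 ... m_K by the Chinese
   remainder theorem, so 2D >= M m_1 ... m_K >= 2 M d. Otherwise a1 differs
   from both b1 and b2; with I the set of moduli pairing a1 with b1, a1 = b1
   modulo M prod_I m_i and a1 = b2 modulo M prod_(not I) m_i, and since
   a1 - b1 = b2 - a2 these two distances add up to at most D.
   Conversely, if M d = M P + M Q with P = prod_I m_i, Q = prod_(not I) m_i,
   the pairs {0, M d} and {M P, M Q} are ambiguous: every M m_k divides M P
   or M Q. *)

From mathcomp Require Import all_boot.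
From mathcomp Require Import zify.

Set Implicit Arguments.
Unset Strict Implicit.
Unset Printing Implicit Defensive.

Lemma cong_neq_gap n x y : x = y %[mod n] -> x <> y -> n + x <= y \/ n + y <= x.
Proof.
move=> eq_xy neq_xy; have [le_xy|/ltnW le_yx] := leqP x y.
  have /dvdn_leq : n %| y - x by rewrite -eqn_mod_dvd // eq_xy.
  lia.
have /dvdn_leq : n %| x - y by rewrite -eqn_mod_dvd // eq_xy.
lia.
Qed.

Lemma eqn_mod_lcm p q x y :
  (x == y %[mod lcmn p q]) = (x == y %[mod p]) && (x == y %[mod q]).
Proof.
wlog le_yx : x y / y <= x; last by rewrite !eqn_mod_dvd // dvdn_lcm.
by have [?|/ltnW ?] := leqP y x; last rewrite !(eq_sym (x %% _)); apply.
Qed.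

Lemma coprime_prod (I : Type) (r : seq I) (P : pred I) (F : I -> nat) a :
  (forall i, P i -> coprime a (F i)) -> coprime a (\prod_(i <- r | P i) F i).
Proof.
move=> coF; apply: (big_ind (coprime a)) => //; first exact: coprimen1.
by move=> u v cu cv; rewrite coprimeMr cu.
Qed.

Section PairwiseCoprime.
Variables (I : finType) (m : I -> nat).
Hypothesis m_coprime : forall i j, i != j -> coprime (m i) (m j).

Lemma coprime_prod_setC (S : {set I}) :
  coprime (\prod_(i in S) m i) (\prod_(i in ~: S) m i).
Proof.
apply: coprime_prod => j; rewrite in_setC => jS; rewrite coprime_sym.
apply: coprime_prod => i iS; apply: m_coprime.
by apply: contraNneq jS => ->.
Qed.

Lemma eqn_mod_Mprod M x y (S : {set I}) : S != set0 ->
  (forall k, k \in S -> x = y %[mod M * m k]) ->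
  x = y %[mod M * \prod_(k in S) m k].
Proof.
case/set0Pn=> k0 k0S eqS; have eqM : x = y %[mod M].
  have dvdM : M %| M * m k0 by apply: dvdn_mulr.
  by rewrite -(modn_dvdm x dvdM) (eqS k0 k0S) modn_dvdm.
rewrite -big_enum.
have : {subset enum S <= S} by move=> k; rewrite mem_enum.
elim: (enum S) (enum_uniq (mem S)) => [|k s IHs] /=; first by rewrite big_nil muln1.
case/andP=> ks us sub_ksS; rewrite big_cons.
have co_k_s : coprime (m k) (\prod_(j <- s) m j).
  rewrite big_seq; apply: coprime_prod => j js; apply: m_coprime.
  by apply: contraNneq ks => ->.
have := muln_lcm_gcd (m k) (\prod_(j <- s) m j).
rewrite (eqP co_k_s) muln1 => <-; rewrite muln_lcmr; apply/eqP.
rewrite eqn_mod_lcm; apply/andP; split; apply/eqP.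
  by apply: eqS; apply: sub_ksS; rewrite mem_head.
by apply: IHs => // j js; apply: sub_ksS; rewrite in_cons js orbT.
Qed.

End PairwiseCoprime.

Lemma mem_residues2 D n (u v : 'I_D.+1) z :
  (z \in residues n [set u; v]) = (z == u %% n) || (z == v %% n).
Proof.
rewrite /residues; apply/mapP/orP => [[w]|].
  by rewrite mem_enum in_set2 => /orP[]/eqP -> ->; [left|right].
by case=> /eqP ->; [exists u | exists v]; rewrite // mem_enum in_set2 eqxx ?orbT.
Qed.

Lemma pair_eq_cases (x1 x2 y1 y2 : nat) :
  (x1 == y1) || (x1 == y2) -> (x2 == y1) || (x2 == y2) ->
  (y1 == x1) || (y1 == x2) -> (y2 == x1) || (y2 == x2) ->
  (x1 = y1 /\ x2 = y2) \/ (x1 = y2 /\ x2 = y1).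
Proof. by move=> /orP[]/eqP ? /orP[]/eqP ? /orP[]/eqP ? /orP[]/eqP ?; lia. Qed.

Lemma residues2_eq D n (a1 a2 b1 b2 : 'I_D.+1) :
  residues n [set a1; a2] =i residues n [set b1; b2] ->
  (a1 = b1 %[mod n] /\ a2 = b2 %[mod n]) \/ (a1 = b2 %[mod n] /\ a2 = b1 %[mod n]).
Proof.
move=> eq_res; have in_res (x y : 'I_D.+1) : x %% n \in residues n [set x; y].
  by rewrite mem_residues2 eqxx.
apply: pair_eq_cases; rewrite -mem_residues2.
- by rewrite -eq_res; apply: in_res.
- by rewrite -eq_res setUC; apply: in_res.
- by rewrite eq_res; apply: in_res.
- by rewrite eq_res setUC; apply: in_res.
Qed.

Lemma ambiguous_sum K (n : 'I_K -> nat) p q :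
  0 < p -> 0 < q -> p != q -> (forall k, (n k %| p) || (n k %| q)) ->
  ambiguous 2 n (p + q).
Proof.
move=> p_gt0 q_gt0 neq_pq n_dvd.
have val_inord x : x <= p + q -> nat_of_ord (inord x : 'I_(p + q).+1) = x.
  by move=> le_x; rewrite inordK.
have [le_p le_q] : p <= p + q /\ q <= p + q by rewrite leq_addr leq_addl.
exists [set inord 0; inord (p + q)], [set inord p; inord q]; split.
- rewrite cards2; suff -> : inord 0 != inord (p + q) :> 'I_(p + q).+1 by [].
  by apply/eqP => /(congr1 (@nat_of_ord _)); rewrite !val_inord //; lia.
- rewrite cards2; suff -> : inord p != inord q :> 'I_(p + q).+1 by [].
  by apply/eqP => /(congr1 (@nat_of_ord _)); rewrite !val_inord //; apply/eqP.
- apply/eqP => /setP/(_ (inord 0)); rewrite !in_set2 eqxx /=.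
  by move/esym/orP => [] /eqP/(congr1 (@nat_of_ord _)); rewrite !val_inord //; lia.
- move=> k z; rewrite !mem_residues2 !val_inord // mod0n.
  have /orP[] := n_dvd k => /dvdnP[c ->].
    by rewrite modnMDl modnMl.
  by rewrite addnC modnMDl modnMl orbC.
Qed.

Lemma dmin_le K (m : 'I_K -> nat) (S : {set 'I_K}) : dmin m <= split_val m S.
Proof. by rewrite /dmin; case: arg_minnP => // I _; apply. Qed.

Lemma prodn_setC (I : finType) (F : I -> nat) (S : {set I}) :
  \prod_(i in S) F i * \prod_(i in ~: S) F i = \prod_i F i.
Proof.
by rewrite [RHS](bigID (mem S)) /=; congr (_ * _); apply: eq_bigl => i; rewrite ?inE.
Qed.

Lemma dmin_double_le_prod K (m : 'I_K -> nat) :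
  3 <= K -> (forall i, 3 <= m i) -> 2 * dmin m <= \prod_i m i.
Proof.
move=> K_ge3 m_ge3; pose o : 'I_K := Ordinal (leq_trans (isT : 0 < 3) K_ge3).
have := dmin_le m [set o]; rewrite -(prodn_setC m [set o]) /split_val big_set1.
set Q := \prod_(i in ~: [set o]) m i => dmin_le_oQ.
have Q_ge9 : 9 <= Q.
  have : \prod_(i in ~: [set o]) 3 <= Q by apply: leq_prod => i _.
  apply: leq_trans; rewrite prod_nat_const cardsC1 card_ord.
  by rewrite (_ : K.-1 = 2 + (K.-1 - 2)) ?expnD ?leq_pmulr ?expn_gt0 //; lia.
have := m_ge3 o; nia.
Qed.

Section DynamicRange.
Variables (K : nat) (m : 'I_K -> nat) (M : nat).
Hypothesis m_coprime : forall i j : 'I_K, i != j -> coprime (m i) (m j).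
Hypothesis M_gt0 : 0 < M.

Lemma ambiguous_split_val (S : {set 'I_K}) :
  1 < \prod_i m i -> ambiguous 2 (fun k => M * m k) (M * split_val m S).
Proof.
rewrite -(prodn_setC m S) /split_val mulnDr.
set P := \prod_(i in S) m i; set Q := \prod_(i in ~: S) m i => PQ_gt1.
have /andP[P_gt0 Q_gt0] : (0 < P) && (0 < Q) by rewrite -muln_gt0 ltnW.
apply: ambiguous_sum; rewrite ?muln_gt0 ?M_gt0 ?P_gt0 ?Q_gt0 //.
  rewrite eqn_mul2l negb_or -lt0n M_gt0; apply/eqP => eq_PQ.
  have := coprime_prod_setC m_coprime S; rewrite -/P -/Q -eq_PQ /coprime gcdnn.
  by move/eqP=> P1; move: PQ_gt1; rewrite -eq_PQ P1.
move=> k; rewrite !dvdn_pmul2l //.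
have [kS|kS] := boolP (k \in S).
  by rewrite /P (bigD1 k) //= dvdn_mulr.
by rewrite /Q (bigD1 k) ?in_setC //= dvdn_mulr ?orbT.
Qed.

Lemma pairs_far_ge (a1 a2 b1 b2 D : nat) : 0 < K ->
  2 * dmin m <= \prod_i m i ->
  a1 <= D -> a2 <= D -> b1 <= D -> b2 <= D ->
  ~ (a1 = b1 /\ a2 = b2) -> ~ (a1 = b2 /\ a2 = b1) ->
  (forall k, (a1 = b1 %[mod M * m k] /\ a2 = b2 %[mod M * m k]) \/
             (a1 = b2 %[mod M * m k] /\ a2 = b1 %[mod M * m k])) ->
  M * dmin m <= D.
Proof.
move=> K_gt0 dmin_le_prod a1D a2D b1D b2D neq_id neq_swap pairs.
have gap x y (S : {set 'I_K}) : S != set0 -> x <> y ->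
    (forall k, k \in S -> x = y %[mod M * m k]) ->
    M * \prod_(k in S) m k + x <= y \/ M * \prod_(k in S) m k + y <= x.
  by move=> S_ne0 neq_xy eqS; apply: cong_neq_gap => //; apply: eqn_mod_Mprod.
have setT_ne0 : [set: 'I_K] != set0 by apply/set0Pn; exists (Ordinal K_gt0).
have prodT : \prod_(k in [set: 'I_K]) m k = \prod_i m i.
  by apply: eq_bigl => k; rewrite in_setT.
have dminT : M * dmin m <= M * \prod_(k in [set: 'I_K]) m k.
  by rewrite prodT leq_mul2l (leq_trans _ dmin_le_prod) ?leq_pmull ?orbT.
have [eq_sum|neq_sum] := eqVneq (a1 + a2) (b1 + b2); last first.
  have add_cong k : a1 + a2 = b1 + b2 %[mod M * m k].
    by case: (pairs k) => -[e1 e2]; rewrite -modnDm e1 e2 modnDm // addnC.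
  have := gap _ _ _ setT_ne0 (elimN eqP neq_sum) (fun k _ => add_cong k).
  have : M * (2 * dmin m) <= M * \prod_i m i by rewrite leq_mul2l dmin_le_prod orbT.
  rewrite -prodT; lia.
pose S := [set k | (a1 == b1 %[mod M * m k]) && (a2 == b2 %[mod M * m k])].
have eqS k : k \in S -> a1 = b1 %[mod M * m k] by rewrite inE => /andP[/eqP].
have eqSC k : k \in ~: S -> a1 = b2 %[mod M * m k].
  by rewrite in_setC inE; case: (pairs k) => -[e1 e2] //; rewrite e1 e2 !eqxx.
have [neq_a1b1 neq_a1b2] : a1 <> b1 /\ a1 <> b2 by lia.
have [S0|/gap gS] := eqVneq S set0.
  rewrite S0 setC0 in eqSC; have := gap _ _ _ setT_ne0 neq_a1b2 eqSC; lia.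
have [ST|/gap gSC] := eqVneq (~: S) set0.
  move: ST; rewrite -setCT => /setC_inj ST.
  rewrite ST in eqS; have := gap _ _ _ setT_ne0 neq_a1b1 eqS; lia.
have : M * dmin m <= M * \prod_(k in S) m k + M * \prod_(k in ~: S) m k.
  by rewrite -mulnDr leq_mul2l dmin_le orbT.
move: (gS _ _ neq_a1b1 eqS) (gSC _ _ neq_a1b2 eqSC).
move: (M * \prod_(k in S) m k) (M * \prod_(k in ~: S) m k) => P Q; lia.
Qed.

Lemma ambiguous_ge D : 0 < K -> 2 * dmin m <= \prod_i m i ->
  ambiguous 2 (fun k => M * m k) D -> M * dmin m <= D.
Proof.
move=> K_gt0 dmin_le_prod [A [B [/eqP/cards2P[a1 [a2 [_ ->]]]
  /eqP/cards2P[b1 [b2 [_ ->]]] neq_AB eq_res]]].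
have [neq_id neq_swap] : ~ (val a1 = val b1 /\ val a2 = val b2) /\
                        ~ (val a1 = val b2 /\ val a2 = val b1).
  split=> -[/val_inj e1 /val_inj e2]; move: neq_AB; rewrite e1 e2 ?eqxx //.
  by rewrite setUC eqxx.
apply: (pairs_far_ge K_gt0 dmin_le_prod _ _ _ _ neq_id neq_swap) => [||||k];
  rewrite ?leq_ord //.
exact: residues2_eq.
Qed.

End DynamicRange.

Theorem theorem1 (K : nat) (m : 'I_K -> nat) (M : nat) :
  3 <= K ->
  (forall i : 'I_K, 0 < m i) ->
  (forall i j : 'I_K, i < j -> m i < m j) ->
  (forall i j : 'I_K, i != j -> coprime (m i) (m j)) ->
  (forall i : 'I_K, val i = 0 -> 3 <= m i) ->
  0 < M ->
  is_dynamic_range 2 (fun k => M * m k) (M * dmin m).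
Proof.
move=> K_ge3 m_gt0 m_incr m_coprime m_ge3_at0 M_gt0.
have K_gt0 : 0 < K by apply: leq_trans K_ge3.
have m_ge3 i : 3 <= m i.
  have := m_ge3_at0 (Ordinal K_gt0) erefl.
  by case: (posnP (val i)) => [/m_ge3_at0 //|/(m_incr (Ordinal K_gt0))]; lia.
have dmin_le_prod := dmin_double_le_prod K_ge3 m_ge3.
have dmin_gt0 : 0 < dmin m by rewrite /dmin /split_val addn_gt0 prodn_gt0.
split.
- by rewrite muln_gt0 M_gt0.
- apply: ambiguous_split_val => //.
  by apply: leq_trans dmin_le_prod; lia.
- by move=> D _; apply: ambiguous_ge.
Qed.
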